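(* Let $\mathcal{D}$ be the arena of a $p$-periodic graph on $V$ and let $\mathcal{A}$ be an augmented arena of $\mathcal{D}$. Let $t\in\mathbb{Z}_p$, $x,y\in V$ and $z\in\Gamma_t(x,\mathcal{D})$. If $(t,y)$ is a shadow corner of $([t+1]_p,z)$ with respect to $\mathcal{A}$, then the arena $\mathcal{A}'$ with $E(\mathcal{A}')=E(\mathcal{A})\cup\{((t,x),([t+1]_p,y))\}$ is an augmented arena of $\mathcal{D}$.
   Context: Let $V$ be a finite set and $p\ge 1$ an integer; $[t]_p$ denotes $t \bmod p$. A $p$-periodic graph $\mathcal{G}=(G_0,\dots,G_{p-1})^*$ is the infinite sequence of directed graphs $G_t=(V,E_{[t]_p})$ where $E_0,\dots,E_{p-1}\subseteq V\times V$ (self-loops allowed), each $G_i$ sinkless. An arena on $V$ of length $p$ is a directed graph with vertex set $\mathbb{Z}_p\times V$ (temporal nodes) all of whose edges have the form $((i,w),([i+1]_p,w'))$. The arena of $\mathcal{G}$ is the arena $\mathcal{D}$ with $((i,u),([i+1]_p,v))\in E(\mathcal{D})$ iff $(u,v)\in E_i$. Write $\Gamma_t(u,\mathcal{M})=\{v : ((t,u),([t+1]_p,v))\in E(\mathcal{M})\}$. Game: first the cop, then the robber choose vertices. In each round $t$, with cop at $c$ and robber at $r$, the cop must move to some $c'\in\Gamma_{[t]_p}(c,\mathcal{D})$; if $c'=r$ the cop wins; otherwise the robber must move to some $r'\in\Gamma_{[t]_p}(r,\mathcal{D})$ and the next round starts. A configuration $(t,c,r)$ ($t\in\mathbb{Z}_p$)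 is the state at the start of a round with index $\equiv t\pmod p$, cop at $c$, robber at $r$, cop to move; it is copwin if from it the cop can force capture in finitely many rounds against every robber strategy. An augmented arena of $\mathcal{D}$ is an arena $\mathcal{A}$ with $E(\mathcal{D})\subseteq E(\mathcal{A})$ such that for every edge $((t,x),([t+1]_p,y))\in E(\mathcal{A})$ the configuration $(t,x,y)$ is copwin. Given an augmented arena $\mathcal{A}$, a temporal node $(t,u)$ is a shadow corner of the temporal node $([t+1]_p,v)$ (and $([t+1]_p,v)$ a shadow cover of $(t,u)$) if $v\neq u$ and $\Gamma_t(u,\mathcal{D})\subseteq\Gamma_{[t+1]_p}(v,\mathcal{A})$. *)

From mathcomp Require Import all_boot.
Set Implicit Arguments. Unset Strict Implicit. Unset Printing Implicit Defensive.

(* A p-periodic graph on V is given by its edge relations E : 'I_p -> rel V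
   (E i u v <-> (u,v) \in E_i).  An arena on V of length p is represented by
   A : 'I_p -> rel V, where A i w w' <-> ((i,w),([i+1]_p,w')) is an edge;
   this encodes exactly the arenas (all edges go from layer i to layer i+1).
   The arena of the periodic graph E is E itself.  [i+1]_p is [ordS i]. *)

Definition sinkless (V : finType) (p : nat) (E : 'I_p -> rel V) : Prop :=
  forall (i : 'I_p) (u : V), exists v, E i u v.

Inductive copwin (V : finType) (p : nat) (D : 'I_p -> rel V)
  : 'I_p -> V -> V -> Prop :=
| copwin_step : forall (t : 'I_p) (c r : V),
    (exists c' : V, D t c c' /\
       (c' = r \/ forall r' : V, D t r r' -> copwin D (ordS t) c' r')) ->
    copwin D t c r.

Definition augmented_arena (V : finType) (p : nat) (D A : 'I_p -> rel V) : Prop :=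
  (forall (i : 'I_p) (x y : V), D i x y -> A i x y) /\
  (forall (t : 'I_p) (x y : V), A t x y -> copwin D t x y).

Definition shadow_corner (V : finType) (p : nat) (D A : 'I_p -> rel V)
  (t : 'I_p) (u v : V) : Prop :=
  v != u /\ (forall w : V, D t u w -> A (ordS t) v w).

Definition add_edge (V : finType) (p : nat) (A : 'I_p -> rel V)
  (t : 'I_p) (x y : V) : 'I_p -> rel V :=
  fun i a b => A i a b || [&& i == t, a == x & b == y].

From mathcomp Require Import all_boot.

Set Implicit Arguments.
Unset Strict Implicit.

(* The cop at (t,x) moves to z; every robber reply r' from y is a D-successor
   of the shadow corner (t,y), hence an A-successor of ([t+1]_p,z), so the
   configuration ([t+1]_p,z,r') is copwin because A is augmented. *)

Section AugmentedArena.

Variables (V : finType) (p : nat) (D A : 'I_p -> rel V).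
Hypothesis augA : augmented_arena D A.

Lemma copwin_shadow_corner (t : 'I_p) (x y z : V) :
  D t x z -> shadow_corner D A t y z -> copwin D t x y.
Proof.
move=> Dxz [_ subA]; apply: copwin_step; exists z; split => //.
by right=> r' Dyr'; apply: augA.2; apply: subA.
Qed.

Lemma augmented_arena_add_edge (t : 'I_p) (x y : V) :
  copwin D t x y -> augmented_arena D (add_edge A t x y).
Proof.
case: augA => subDA winA winxy; split=> [i a b Dab | i a b].
  by rewrite /add_edge subDA.
by case/orP=> [/winA // | /and3P[/eqP-> /eqP-> /eqP->]].
Qed.

End AugmentedArena.

Theorem theorem2 (V : finType) (p : nat) (hp : 0 < p)
  (E : 'I_p -> rel V) (hE : sinkless E)
  (A : 'I_p -> rel V) (hA : augmented_arena E A)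
  (t : 'I_p) (x y z : V) (hz : E t x z)
  (hsc : shadow_corner E A t y z) :
  augmented_arena E (add_edge A t x y).
Proof.
exact (augmented_arena_add_edge hA (copwin_shadow_corner hA hz hsc)).
Qed.
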